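(* Let $l$ be a prime with $l\equiv 4\pmod 5$, let $j\in\mathbb{F}_l$ with $j\neq 0,1728$, and let $a_1\in\mathbb{F}_l$ be a root of $G(x^5,j)\equiv 0\pmod l$, where $G(x,j)=(x^4-228x^3+494x^2+228x+1)^3-jx(1-11x-x^2)^5$. Then $M(a_1)\in\mathbb{F}_{l^2}\setminus\mathbb{F}_l$ for every $M\in\bar G_{60}\setminus\bar H$.
   Context: Since $l\equiv 4\pmod 5$, a primitive $5$th root of unity $\zeta$ lies in $\mathbb{F}_{l^2}\setminus\mathbb{F}_l$; put $\sqrt5=\zeta-\zeta^2-\zeta^3+\zeta^4\in\mathbb{F}_l$. Let $\bar G_{60}$ be the group of linear fractional transformations over $\mathbb{F}_{l^2}$ generated by $S(z)=\zeta z$ and $T(z)=\dfrac{-(1+\sqrt5)z+2}{2z+1+\sqrt5}$ (it is isomorphic to $A_5$; it is the reduction of the icosahedral group $G_{60}$ defined by the same formulas over $\mathbb{Q}(\zeta_5)$). Let $U(z)=-1/z$ and $\bar H=\{1,T,U,TU\}\subset \bar G_{60}$. *)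

From mathcomp Require Import all_boot all_order all_algebra all_field.
Set Implicit Arguments. Unset Strict Implicit. Unset Printing Implicit Defensive.
Import GRing.Theory.
Local Open Scope ring_scope.

Section Icosa.
Variable K : fieldType.

Definition mx2 (a b c d : K) : 'M[K]_2 :=
  \matrix_(i < 2, k < 2)
    if i == 0 :> nat then (if k == 0 :> nat then a else b)
    else (if k == 0 :> nat then c else d).

Definition sqrt5 (z : K) : K := z - z ^+ 2 - z ^+ 3 + z ^+ 4.

Definition Smx (z : K) : 'M[K]_2 := mx2 z 0 0 1.
Definition Tmx (z : K) : 'M[K]_2 :=
  mx2 (- (1 + sqrt5 z)) 2 2 (1 + sqrt5 z).
Definition Umx : 'M[K]_2 := mx2 0 (-1) 1 0.

(* Matrix representatives of the elements of the group generated by S and T: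
   all finite compositions of S and T (since the group is finite, the monoid
   generated equals the group generated). *)
Inductive G60mx (z : K) : 'M[K]_2 -> Prop :=
  | G60_1 : G60mx z 1%:M
  | G60_S M : G60mx z M -> G60mx z (Smx z *m M)
  | G60_T M : G60mx z M -> G60mx z (Tmx z *m M).

(* M represents an element of H = {1, T, U, TU} (as linear fractional
   transformations, i.e. up to nonzero scalars) *)
Definition in_Hbar (z : K) (M : 'M[K]_2) : Prop :=
  exists c : K, c != 0 /\
    (M = c *: 1%:M \/ M = c *: Tmx z \/ M = c *: Umx \/ M = c *: (Tmx z *m Umx)).

Definition mobius (M : 'M[K]_2) (x : K) : K :=
  (M ord0 ord0 * x + M ord0 ord_max) / (M ord_max ord0 * x + M ord_max ord_max).

Definition Gfun (x j : K) : K :=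
  (x ^+ 4 - 228%:R * x ^+ 3 + 494%:R * x ^+ 2 + 228%:R * x + 1) ^+ 3
  - j * x * (1 - 11%:R * x - x ^+ 2) ^+ 5.

End Icosa.

(* The Frobenius x |-> x^l of F_(l^2) fixes a1, 2 and sqrt5 and sends zeta to zeta^-1;
   on the generators S and T this is conjugation by U, so the Frobenius image of every
   M = [[p, q], [r, s]] in G60 is proportional to U M U. Hence M(a1)^l = (U M U)(a1), and
   M(a1) lies in F_l exactly when a1 is a root of (p a + q)(q a - p) - (r - s a)(r a + s).
   The 60 elements of G60 are enumerated by computation as matrices over Z[zeta]. For
   each M outside H this quadratic divides one of Klein's vertex, face and edge forms
   evaluated at X^5, and for every M the pole -s/r is a root of the vertex form; none of
   these forms vanishes at a1^5 because G(a1^5, j) = 0 with j <> 0, 1728. Divisibility is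
   checked by pseudo-division over Z[zeta], and the nonvanishing in F_(l^2) of the
   elements of Z[zeta] involved by their norms having no prime factor other than 2, 3, 5. *)

From Stdlib Require Import ZArith.
From mathcomp Require Import all_boot all_order all_algebra all_field.
From mathcomp Require Import zify ssrZ ring.
Set Implicit Arguments.
Unset Strict Implicit.
Unset Printing Implicit Defensive.
Import GRing.Theory.
Local Open Scope ring_scope.

Section KleinForms.
Variable K : fieldType.
Implicit Types x j : K.

Definition klein_vertex x := x * (1 - 11%:R * x - x ^+ 2).
Definition klein_face x :=
  x ^+ 4 - 228%:R * x ^+ 3 + 494%:R * x ^+ 2 + 228%:R * x + 1.
Definition klein_edge x :=
  x ^+ 6 + 522%:R * x ^+ 5 - 10005%:R * x ^+ 4 - 10005%:R * x ^+ 2 - 522%:R * x + 1.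

Lemma GfunE x j :
  Gfun x j = klein_face x ^+ 3 - j * klein_vertex x * (1 - 11%:R * x - x ^+ 2) ^+ 4.
Proof. by rewrite /Gfun /klein_face /klein_vertex; ring. Qed.

Lemma klein_syzygy x :
  klein_edge x ^+ 2
  = klein_face x ^+ 3 - 1728%:R * klein_vertex x * (1 - 11%:R * x - x ^+ 2) ^+ 4.
Proof. by rewrite /klein_edge /klein_face /klein_vertex; ring. Qed.

(* The resultant of the two forms is 5^5. *)
Lemma klein_vertex_face_coprime x :
  (- 679478%:R - 1485989%:R * x + 684695%:R * x ^+ 2 - 3003%:R * x ^+ 3) * klein_vertex x
  + (3125%:R - 33022%:R * x - 3003%:R * x ^+ 2) * klein_face x = 3125%:R.
Proof. by rewrite /klein_vertex /klein_face; ring. Qed.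

Section GfunRoot.
Variables x j : K.
Hypotheses (char5 : (5%:R : K) != 0) (Gx : Gfun x j = 0).

Let face3E : klein_face x ^+ 3 = j * klein_vertex x * (1 - 11%:R * x - x ^+ 2) ^+ 4.
Proof. by apply/eqP; rewrite -subr_eq0 -GfunE Gx. Qed.

Lemma Gfun_root_vertex_neq0 : klein_vertex x != 0.
Proof.
apply/eqP=> V0; have F0 : klein_face x = 0.
  by apply/eqP; move: face3E; rewrite V0 mulr0 mul0r => /eqP; rewrite expf_eq0.
have := klein_vertex_face_coprime x; rewrite V0 F0 !mulr0 addr0 => /esym/eqP.
by rewrite (_ : 3125 = 5 ^ 5)%N // natrX expf_eq0 (negbTE char5) andbF.
Qed.

Let tail_neq0 : (1 - 11%:R * x - x ^+ 2) ^+ 4 != 0.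
Proof.
by rewrite expf_neq0 //; have := Gfun_root_vertex_neq0; rewrite mulf_eq0 negb_or => /andP[].
Qed.

Lemma Gfun_root_face_neq0 : j != 0 -> klein_face x != 0.
Proof.
move=> j0; have := mulf_neq0 (mulf_neq0 j0 Gfun_root_vertex_neq0) tail_neq0.
by rewrite -face3E expf_eq0.
Qed.

Lemma Gfun_root_edge_neq0 : j != 1728%:R -> klein_edge x != 0.
Proof.
move=> j1728; rewrite -subr_eq0 in j1728.
have := mulf_neq0 (mulf_neq0 j1728 Gfun_root_vertex_neq0) tail_neq0.
by rewrite !mulrBl -face3E -klein_syzygy expf_eq0.
Qed.

End GfunRoot.
End KleinForms.

Section Mobius.
Variable K : fieldType.
Implicit Types (M N : 'M[K]_2) (a b c d x : K).

Lemma mx2_mul a b c d a' b' c' d' :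
  mx2 a b c d *m mx2 a' b' c' d'
  = mx2 (a * a' + b * c') (a * b' + b * d') (c * a' + d * c') (c * b' + d * d').
Proof.
apply/matrixP=> i k; rewrite !mxE !big_ord_recl big_ord0 !mxE /=.
by case: i => [[|[|]]] //= _; case: k => [[|[|]]] //= _; rewrite addr0.
Qed.

Lemma scale_mx2 k a b c d : k *: mx2 a b c d = mx2 (k * a) (k * b) (k * c) (k * d).
Proof. by apply/matrixP=> -[[|[|//]] ?] -[[|[|//]] ?]; rewrite !mxE. Qed.

Lemma map_mx2 (f : {rmorphism K -> K}) a b c d :
  map_mx f (mx2 a b c d) = mx2 (f a) (f b) (f c) (f d).
Proof. by apply/matrixP=> -[[|[|//]] ?] -[[|[|//]] ?]; rewrite !mxE. Qed.

Lemma mx2_scalar a : a%:M = mx2 a 0 0 a.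
Proof. by apply/matrixP=> -[[|[|//]] ?] -[[|[|//]] ?]; rewrite !mxE. Qed.

Lemma Umx_sqr : Umx K *m Umx K = - 1%:M.
Proof.
rewrite /Umx mx2_mul -scaleN1r mx2_scalar scale_mx2.
by congr mx2; ring.
Qed.

Definition mobius_num M x := M ord0 ord0 * x + M ord0 ord_max.
Definition mobius_den M x := M ord_max ord0 * x + M ord_max ord_max.
Definition mobius_cross M N x :=
  mobius_num M x * mobius_den N x - mobius_num N x * mobius_den M x.

Lemma mobius_numZ c M x : mobius_num (c *: M) x = c * mobius_num M x.
Proof. by rewrite /mobius_num !mxE mulrDr mulrA. Qed.

Lemma mobius_denZ c M x : mobius_den (c *: M) x = c * mobius_den M x.
Proof. by rewrite /mobius_den !mxE mulrDr mulrA. Qed.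

Lemma mobius_crossZ c d M N x :
  mobius_cross (c *: M) (d *: N) x = c * d * mobius_cross M N x.
Proof. by rewrite /mobius_cross !mobius_numZ !mobius_denZ; ring. Qed.

Lemma mobiusZ c M x : c != 0 -> mobius (c *: M) x = mobius M x.
Proof.
move=> c0; rewrite /mobius -/(mobius_den _ x) mobius_denZ !mxE -mulrA -mulrDr.
by rewrite invfM mulrACA divff // mul1r.
Qed.

Lemma mobius_eqE M N x : mobius_den M x != 0 -> mobius_den N x != 0 ->
  (mobius M x == mobius N x) = (mobius_cross M N x == 0).
Proof. by move=> dM dN; rewrite /mobius_cross subr_eq0 eqr_div. Qed.

Lemma rmorph_mobius_den (f : {rmorphism K -> K}) M x :
  f (mobius_den M x) = mobius_den (map_mx f M) (f x).
Proof. by rewrite /mobius_den rmorphD rmorphM !mxE. Qed.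

Lemma rmorph_mobius (f : {rmorphism K -> K}) M x :
  f (mobius M x) = mobius (map_mx f M) (f x).
Proof. by rewrite /mobius fmorph_div !rmorphD !rmorphM !mxE. Qed.

End Mobius.

Section TwistedConjugation.
Variables (K : fieldType) (f : {rmorphism K -> K}) (zeta : K).
Hypotheses (zeta5 : zeta ^+ 5 = 1) (f_zeta : f zeta = zeta ^+ 4).
Local Notation U := (Umx K).
Local Notation twisted M c := (map_mx f M = c *: (U *m M *m U)).

Lemma twisted_mul G M cG cM : twisted G cG -> twisted M cM ->
  twisted (G *m M) (- (cG * cM)).
Proof.
move=> fG fM; rewrite map_mxM fG fM -scalemxAl -scalemxAr scalerA scaleNr -scalerN.
congr (_ *: _); rewrite !mulmxA -(mulmxA _ U U) Umx_sqr.
by rewrite mulmxN mulmx1 !mulNmx.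
Qed.

Lemma twisted_S : twisted (Smx zeta) (- zeta ^+ 4).
Proof.
rewrite map_mx2 f_zeta rmorph0 rmorph1 /Umx !mx2_mul scale_mx2.
by congr mx2; ring: zeta5.
Qed.

Lemma twisted_T : twisted (Tmx zeta) 1.
Proof.
have f_sqrt5 : f (sqrt5 zeta) = sqrt5 zeta.
  by rewrite /sqrt5 !rmorphD !rmorphN !rmorphXn f_zeta; ring: zeta5.
rewrite map_mx2 !rmorphN rmorphD rmorph1 f_sqrt5 rmorph_nat.
by rewrite /Umx !mx2_mul scale_mx2; congr mx2; ring.
Qed.

Lemma twisted_G60 M : G60mx zeta M -> exists2 c, c != 0 & twisted M c.
Proof.
elim=> [|{}M _ [c c0 fM]|{}M _ [c c0 fM]].
- exists (-1); first by rewrite oppr_eq0 oner_eq0.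
  by rewrite map_mx1 mulmx1 Umx_sqr scaleN1r opprK.
- exists (- (- zeta ^+ 4 * c)); last exact: twisted_mul twisted_S fM.
  rewrite !oppr_eq0 mulf_neq0 // oppr_eq0 expf_neq0 //.
  by apply: contra_eq_neq zeta5 => ->; rewrite expr0n eq_sym oner_eq0.
- exists (- (1 * c)); last exact: twisted_mul twisted_T fM.
  by rewrite oppr_eq0 mul1r.
Qed.

End TwistedConjugation.

Local Open Scope Z_scope.

(* [ZCyc c0 c1 c2 c3 c4] stands for c0 + c1 z + ... + c4 z^4 in Z[z]/(1 + z + ... + z^4);
   the representation is not unique, and [zcyc_eqb] compares modulo (1, 1, 1, 1, 1). *)
Record zcyc := ZCyc { zc0 : Z; zc1 : Z; zc2 : Z; zc3 : Z; zc4 : Z }.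

Definition zcyc_const n := ZCyc n 0 0 0 0.
Local Notation zcyc0 := (zcyc_const 0).
Definition zcyc_add x y :=
  ZCyc (zc0 x + zc0 y) (zc1 x + zc1 y) (zc2 x + zc2 y) (zc3 x + zc3 y) (zc4 x + zc4 y).
Definition zcyc_opp x := ZCyc (- zc0 x) (- zc1 x) (- zc2 x) (- zc3 x) (- zc4 x).
Definition zcyc_mul x y :=
  let: ZCyc a0 a1 a2 a3 a4 := x in let: ZCyc b0 b1 b2 b3 b4 := y in
  ZCyc (a0*b0 + a1*b4 + a2*b3 + a3*b2 + a4*b1)
       (a0*b1 + a1*b0 + a2*b4 + a3*b3 + a4*b2)
       (a0*b2 + a1*b1 + a2*b0 + a3*b4 + a4*b3)
       (a0*b3 + a1*b2 + a2*b1 + a3*b0 + a4*b4)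
       (a0*b4 + a1*b3 + a2*b2 + a3*b1 + a4*b0).
Definition zcyc_exp x k := iter k (zcyc_mul x) (zcyc_const 1).
Definition zcyc_eqb x y :=
  let d := zcyc_add x (zcyc_opp y) in
  [&& zc1 d =? zc0 d, zc2 d =? zc0 d, zc3 d =? zc0 d & zc4 d =? zc0 d].

Definition zcyc_sigma2 x := let: ZCyc a0 a1 a2 a3 a4 := x in ZCyc a0 a3 a1 a4 a2.
Definition zcyc_sigma3 x := let: ZCyc a0 a1 a2 a3 a4 := x in ZCyc a0 a2 a4 a1 a3.
Definition zcyc_sigma4 x := let: ZCyc a0 a1 a2 a3 a4 := x in ZCyc a0 a4 a3 a2 a1.
Definition zcyc_cofactor x :=
  zcyc_mul (zcyc_sigma2 x) (zcyc_mul (zcyc_sigma3 x) (zcyc_sigma4 x)).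
Definition zcyc_norm x := let p := zcyc_mul x (zcyc_cofactor x) in zc0 p - zc1 p.

Fixpoint Zremove (fuel : nat) (p n : Z) : Z :=
  if fuel is f.+1 then if n mod p =? 0 then Zremove f p (n / p) else n else n.
Definition smooth235 (n : Z) : bool :=
  let f := Z.to_nat (Z.log2 (Z.abs n)) in
  Z.abs (Zremove f 5 (Zremove f 3 (Zremove f 2 n))) =? 1.

(* [x] divides its norm; when the norm is {2,3,5}-smooth, [x] cannot vanish in a
   field where 2, 3 and 5 do not. *)
Definition zcyc_unit235 x :=
  zcyc_eqb (zcyc_mul x (zcyc_cofactor x)) (zcyc_const (zcyc_norm x))
  && smooth235 (zcyc_norm x).

(* Polynomials over Z[z] are coefficient lists, constant term first. *)
Fixpoint zpoly_add (p q : seq zcyc) : seq zcyc :=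
  match p, q with
  | [::], _ => q
  | _, [::] => p
  | c :: p', d :: q' => zcyc_add c d :: zpoly_add p' q'
  end.
Definition zpoly_scale c p := map (zcyc_mul c) p.
Definition zpoly_opp p := map zcyc_opp p.
Fixpoint zpoly_mul (p q : seq zcyc) : seq zcyc :=
  if p is c :: p' then zpoly_add (zpoly_scale c q) (zcyc0 :: zpoly_mul p' q) else [::].
Definition zpoly_eqb p q := all (zcyc_eqb^~ zcyc0) (zpoly_add p (zpoly_opp q)).
Definition zpoly_strip p :=
  let r := rev p in rev (drop (find (fun c => ~~ zcyc_eqb c zcyc0) r) r).
Definition zpoly_lead p := last zcyc0 (zpoly_strip p).

Fixpoint zpoly_pdiv_rec (Q : seq zcyc) (n k : nat) (g F : seq zcyc) :=
  if n is n'.+1 then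
    if (size F < size Q)%N then (k, g) else
    let m := rcons (nseq (size F - size Q) zcyc0) (last zcyc0 F) in
    let lc := last zcyc0 Q in
    zpoly_pdiv_rec Q n' k.+1 (zpoly_add (zpoly_scale lc g) m)
      (zpoly_strip (zpoly_add (zpoly_scale lc F) (zpoly_opp (zpoly_mul m Q))))
  else (k, g).
Definition zpoly_pdiv F Q := zpoly_pdiv_rec (zpoly_strip Q) (size F) 0 [::] (zpoly_strip F).

(* Checks lc(Q)^k F = Q g for the pseudo-quotient g, so that every root of Q is a root
   of F; only this identity is used, so [zpoly_pdiv] itself needs no proof. *)
Definition zpoly_dvd_cert Q F :=
  let: (k, g) := zpoly_pdiv F Q in
  zcyc_unit235 (zpoly_lead Q)
  && zpoly_eqb (zpoly_scale (zcyc_exp (zpoly_lead Q) k) F) (zpoly_mul Q g).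

Definition inflate5 (s : seq Z) : seq zcyc :=
  flatten [seq zcyc_const c :: nseq 4 zcyc0 | c <- s].
Definition vertex_form := inflate5 [:: 0; 1; -11; -1].
Definition face_form := inflate5 [:: 1; 228; 494; -228; 1].
Definition edge_form := inflate5 [:: 1; -522; -10005; 0; -10005; 522; 1].

Record zmx := ZMx { zm00 : zcyc; zm01 : zcyc; zm10 : zcyc; zm11 : zcyc }.
Definition zmx_mul A B :=
  ZMx (zcyc_add (zcyc_mul (zm00 A) (zm00 B)) (zcyc_mul (zm01 A) (zm10 B)))
      (zcyc_add (zcyc_mul (zm00 A) (zm01 B)) (zcyc_mul (zm01 A) (zm11 B)))
      (zcyc_add (zcyc_mul (zm10 A) (zm00 B)) (zcyc_mul (zm11 A) (zm10 B)))
      (zcyc_add (zcyc_mul (zm10 A) (zm01 B)) (zcyc_mul (zm11 A) (zm11 B))).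
Definition zmx_entries A := [:: zm00 A; zm01 A; zm10 A; zm11 A].
Definition zmx_entry A i := nth zcyc0 (zmx_entries A) i.
Definition zmx_parallel A B :=
  all (fun i => all (fun k => zcyc_eqb (zcyc_mul (zmx_entry A i) (zmx_entry B k))
                                       (zcyc_mul (zmx_entry A k) (zmx_entry B i)))
                    (iota 0 4)) (iota 0 4).
(* [if] rather than [&&]: the VM evaluates both arguments of [andb]. *)
Definition zmx_proportional A B :=
  if zmx_parallel A B then
    has (fun i => zcyc_unit235 (zmx_entry A i) && zcyc_unit235 (zmx_entry B i)) (iota 0 4)
  else false.
Definition zmx_cross A B :=
  zpoly_add (zpoly_mul [:: zm01 A; zm00 A] [:: zm11 B; zm10 B])
            (zpoly_opp (zpoly_mul [:: zm01 B; zm00 B] [:: zm11 A; zm10 A])).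

Local Close Scope Z_scope.

Definition Zr {R : pzRingType} (n : Z) : R := (int_of_Z n)%:~R.

Section IntegerImage.
Variable R : pzRingType.

Lemma ZrD a b : Zr (Z.add a b) = Zr a + Zr b :> R.
Proof. by rewrite /Zr -intrD -rmorphD. Qed.

Lemma ZrN a : Zr (Z.opp a) = - Zr a :> R.
Proof. by rewrite /Zr -intrN -rmorphN. Qed.

Lemma ZrM a b : Zr (Z.mul a b) = Zr a * Zr b :> R.
Proof. by rewrite /Zr -intrM -rmorphM. Qed.

End IntegerImage.

Section CyclotomicEvaluation.
Variables (R : comPzRingType) (zeta : R).
Hypothesis cyclo5 : 1 + zeta + zeta ^+ 2 + zeta ^+ 3 + zeta ^+ 4 = 0.

Lemma cyclo5_expr5 : zeta ^+ 5 = 1.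
Proof.
apply/eqP; rewrite -subr_eq0 -(mulr0 (zeta - 1)) -cyclo5.
by apply/eqP; ring.
Qed.

Definition zcyc_eval x : R :=
  Zr (zc0 x) + Zr (zc1 x) * zeta + Zr (zc2 x) * zeta ^+ 2
  + Zr (zc3 x) * zeta ^+ 3 + Zr (zc4 x) * zeta ^+ 4.

Lemma zcyc_eval_const n : zcyc_eval (zcyc_const n) = Zr n.
Proof. by rewrite /zcyc_eval /= /Zr /=; ring. Qed.

Lemma zcyc_evalD x y : zcyc_eval (zcyc_add x y) = zcyc_eval x + zcyc_eval y.
Proof. by case: x y => ? ? ? ? ? [? ? ? ? ?]; rewrite /zcyc_eval /= !ZrD; ring. Qed.

Lemma zcyc_evalN x : zcyc_eval (zcyc_opp x) = - zcyc_eval x.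
Proof. by case: x => ? ? ? ? ?; rewrite /zcyc_eval /= !ZrN; ring. Qed.

Lemma zcyc_evalM x y : zcyc_eval (zcyc_mul x y) = zcyc_eval x * zcyc_eval y.
Proof.
have zeta5 := cyclo5_expr5.
by case: x y => ? ? ? ? ? [? ? ? ? ?]; rewrite /zcyc_eval /= !ZrD !ZrM; ring: zeta5.
Qed.

Lemma zcyc_eval_exp x k : zcyc_eval (zcyc_exp x k) = zcyc_eval x ^+ k.
Proof.
elim: k => [|k IH]; first by rewrite zcyc_eval_const.
by rewrite /zcyc_exp iterS zcyc_evalM -/(zcyc_exp x k) IH exprS.
Qed.

Lemma zcyc_eqbP x y : zcyc_eqb x y -> zcyc_eval x = zcyc_eval y.
Proof.
rewrite /zcyc_eqb; set d := zcyc_add x _.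
have -> : zcyc_eval x = zcyc_eval y + zcyc_eval d by rewrite zcyc_evalD zcyc_evalN; ring.
case: d => d0 ? ? ? ? /= /and4P[/Z.eqb_eq-> /Z.eqb_eq-> /Z.eqb_eq-> /Z.eqb_eq->].
rewrite /zcyc_eval /= -[RHS]addr0 -(mulr0 (Zr d0)) -cyclo5; congr (_ + _); ring.
Qed.

Definition zpoly_eval (p : seq zcyc) (a : R) :=
  foldr (fun c acc => zcyc_eval c + a * acc) 0 p.

Lemma zpoly_evalD p q a :
  zpoly_eval (zpoly_add p q) a = zpoly_eval p a + zpoly_eval q a.
Proof.
elim: p q => [|c p IH] [|d q] /=; rewrite ?add0r ?addr0 //.
by rewrite IH zcyc_evalD; ring.
Qed.

Lemma zpoly_evalZ c p a : zpoly_eval (zpoly_scale c p) a = zcyc_eval c * zpoly_eval p a.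
Proof. by elim: p => [|d p IH] /=; rewrite ?mulr0 // IH zcyc_evalM; ring. Qed.

Lemma zpoly_evalN p a : zpoly_eval (zpoly_opp p) a = - zpoly_eval p a.
Proof. by elim: p => [|d p IH] /=; rewrite ?oppr0 // IH zcyc_evalN; ring. Qed.

Lemma zpoly_evalM p q a : zpoly_eval (zpoly_mul p q) a = zpoly_eval p a * zpoly_eval q a.
Proof.
elim: p => [|c p IH] /=; first by rewrite mul0r.
by rewrite zpoly_evalD zpoly_evalZ /= IH zcyc_eval_const; ring.
Qed.

Lemma zpoly_eqbP p q a : zpoly_eqb p q -> zpoly_eval p a = zpoly_eval q a.
Proof.
have eval_null s : all (zcyc_eqb^~ (zcyc_const 0)) s -> zpoly_eval s a = 0.
  elim: s => //= c s IH /andP[/zcyc_eqbP-> /IH->].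
  by rewrite zcyc_eval_const mulr0 addr0.
move/eval_null/eqP; rewrite zpoly_evalD zpoly_evalN subr_eq0.
by move/eqP.
Qed.

End CyclotomicEvaluation.

Section NonzeroCertificates.
Variables (K : fieldType) (zeta : K).
Hypothesis cyclo5 : 1 + zeta + zeta ^+ 2 + zeta ^+ 3 + zeta ^+ 4 = 0.
Hypotheses (char2 : (2%:R : K) != 0) (char3 : (3%:R : K) != 0) (char5 : (5%:R : K) != 0).
Local Notation zeval := (zcyc_eval zeta).
Local Notation peval := (zpoly_eval zeta).

Lemma Zremove_neq0 fuel p n :
  Zr p != 0 :> K -> Zr (Zremove fuel p n) != 0 :> K -> Zr n != 0 :> K.
Proof.
elim: fuel n => [|fuel IH] n p0 //=; case: ifP => // /Z.eqb_eq pn /(IH _ p0) np0.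
have p_neq0 : p <> Z0 by move=> p_0; move: p0; rewrite p_0 /Zr eqxx.
by rewrite (Z_div_exact_full_2 n p) // ZrM mulf_neq0.
Qed.

Lemma smooth235_neq0 n : smooth235 n -> Zr n != 0 :> K.
Proof.
rewrite /smooth235; set f := Z.to_nat _ => /Z.eqb_eq n1.
apply: (@Zremove_neq0 f (Zpos 2) _ char2); apply: (@Zremove_neq0 f (Zpos 3) _ char3).
apply: (@Zremove_neq0 f (Zpos 5) _ char5).
by move: n1; case: (Zremove f _ _) => [|[]|[]] //= _;
  [rewrite (_ : Zr _ = 1) | rewrite (_ : Zr _ = -1) ?oppr_eq0]; rewrite ?oner_eq0.
Qed.

Lemma zcyc_unit235_neq0 x : zcyc_unit235 x -> zeval x != 0.
Proof.
case/andP=> /(zcyc_eqbP cyclo5) norm_x /smooth235_neq0.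
by rewrite -(zcyc_eval_const zeta) -norm_x (zcyc_evalM cyclo5) mulf_eq0 negb_or => /andP[].
Qed.

Lemma zpoly_dvd_certP Q F a : zpoly_dvd_cert Q F -> peval Q a = 0 -> peval F a = 0.
Proof.
rewrite /zpoly_dvd_cert; case: zpoly_pdiv => k g /andP[/zcyc_unit235_neq0 lc0 dvdQF] Qa0.
move: (zpoly_eqbP cyclo5 a dvdQF).
rewrite (zpoly_evalZ cyclo5) (zpoly_evalM cyclo5) Qa0 mul0r (zcyc_eval_exp cyclo5) => /eqP.
by rewrite mulf_eq0 expf_eq0 (negbTE lc0) andbF => /eqP.
Qed.

Definition zmx_eval A :=
  mx2 (zeval (zm00 A)) (zeval (zm01 A)) (zeval (zm10 A)) (zeval (zm11 A)).

Lemma zmx_evalM A B : zmx_eval (zmx_mul A B) = zmx_eval A *m zmx_eval B.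
Proof.
case: A B => ? ? ? ? [? ? ? ?].
by rewrite /zmx_eval mx2_mul /= !zcyc_evalD !(zcyc_evalM cyclo5).
Qed.

Lemma zmx_crossE A B a :
  peval (zmx_cross A B) a = mobius_cross (zmx_eval A) (zmx_eval B) a.
Proof.
rewrite /zmx_cross zpoly_evalD zpoly_evalN !(zpoly_evalM cyclo5) /=.
by rewrite /mobius_cross /mobius_num /mobius_den !mxE /=; ring.
Qed.

Lemma zmx_proportionalP A B :
  zmx_proportional A B -> exists2 c, c != 0 & zmx_eval A = c *: zmx_eval B.
Proof.
rewrite /zmx_proportional; case: ifP => // /allP parallel /hasP[i i4].
case/andP=> /zcyc_unit235_neq0 Ai0 /zcyc_unit235_neq0 Bi0.
exists (zeval (zmx_entry A i) / zeval (zmx_entry B i)); first by rewrite mulf_neq0 ?invr_eq0.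
have entry k : k \in iota 0 4 -> zeval (zmx_entry A k)
    = zeval (zmx_entry A i) / zeval (zmx_entry B i) * zeval (zmx_entry B k).
  move=> k4; have /(zcyc_eqbP cyclo5) := allP (parallel i i4) k k4.
  by rewrite !(zcyc_evalM cyclo5) mulrAC => ->; rewrite mulfK.
by rewrite scale_mx2; congr mx2; [apply: (entry 0%N) | apply: (entry 1%N)
  | apply: (entry 2%N) | apply: (entry 3%N)].
Qed.

End NonzeroCertificates.

Local Open Scope Z_scope.

Definition zmx1 := ZMx (zcyc_const 1) zcyc0 zcyc0 (zcyc_const 1).
Definition zS := ZMx (ZCyc 0 1 0 0 0) zcyc0 zcyc0 (zcyc_const 1).
Definition zT :=
  let u := ZCyc 1 1 (-1) (-1) 1 in ZMx (zcyc_opp u) (zcyc_const 2) (zcyc_const 2) u.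
Definition zU := ZMx zcyc0 (zcyc_const (-1)) (zcyc_const 1) zcyc0.

Definition icosa_grow (L : seq zmx) : seq zmx :=
  foldl (fun acc P => if has (zmx_proportional P) acc then acc else rcons acc P) L
        [seq zmx_mul G W | G <- [:: zS; zT], W <- L].
(* Ten breadth-first rounds reach all 60 elements; [icosa_certified] checks closure. *)
Definition icosa := Eval vm_compute in iter 10 icosa_grow [:: zmx1].

(* Vanishes at a exactly when W(a) = (U W U)(a), by [mobius_eqE]. *)
Definition icosa_fixpoly W := zmx_cross W (zmx_mul (zmx_mul zU W) zU).
Definition icosa_elt_ok W :=
  zpoly_dvd_cert [:: zm11 W; zm10 W] vertex_form
  && (has (zmx_proportional W) [:: zmx1; zT; zU; zmx_mul zT zU]
      || has (zpoly_dvd_cert (icosa_fixpoly W)) [:: vertex_form; face_form; edge_form]).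
Definition icosa_certified :=
  [&& has (zmx_proportional zmx1) icosa,
      all (fun W => has (zmx_proportional (zmx_mul zS W)) icosa
                    && has (zmx_proportional (zmx_mul zT W)) icosa) icosa
    & all icosa_elt_ok icosa].

Local Close Scope Z_scope.

Lemma icosa_certifiedT : icosa_certified.
Proof. by vm_compute. Qed.

Section IcosahedralGroup.
Variables (K : fieldType) (zeta : K).
Hypothesis cyclo5 : 1 + zeta + zeta ^+ 2 + zeta ^+ 3 + zeta ^+ 4 = 0.
Hypotheses (char2 : (2%:R : K) != 0) (char3 : (3%:R : K) != 0) (char5 : (5%:R : K) != 0).
Local Notation zmx_eval := (zmx_eval zeta).
Local Notation icosa_mx i := (zmx_eval (nth zmx1 icosa i)).

Lemma zmx_eval1 : zmx_eval zmx1 = 1%:M.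
Proof. by rewrite /zmx_eval /= !zcyc_eval_const mx2_scalar. Qed.

Lemma zmx_eval_S : zmx_eval zS = Smx zeta.
Proof. by rewrite /zmx_eval /= !zcyc_eval_const /zcyc_eval /= /Smx; congr mx2; ring. Qed.

Lemma zmx_eval_T : zmx_eval zT = Tmx zeta.
Proof.
rewrite /zmx_eval /= !zcyc_eval_const /Tmx /sqrt5; congr mx2; rewrite /zcyc_eval /= /Zr; ring.
Qed.

Lemma zmx_eval_U : zmx_eval zU = Umx K.
Proof. by rewrite /zmx_eval /= !zcyc_eval_const. Qed.

Lemma icosa_hasP A : has (zmx_proportional A) icosa ->
  exists2 i, (i < size icosa)%N & exists2 c, c != 0 & zmx_eval A = c *: icosa_mx i.
Proof.
case/(has_nthP zmx1)=> i Hi /(zmx_proportionalP cyclo5 char2 char3 char5)[c c0 E].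
by exists i => //; exists c.
Qed.

Lemma G60mx_icosa M : G60mx zeta M ->
  exists2 i, (i < size icosa)%N & exists2 e, e != 0 & M = e *: icosa_mx i.
Proof.
have /and3P[/icosa_hasP one /(all_nthP zmx1) closed _] := icosa_certifiedT.
have step G i e : (i < size icosa)%N -> e != 0 ->
    has (zmx_proportional (zmx_mul G (nth zmx1 icosa i))) icosa ->
  exists2 j, (j < size icosa)%N &
    exists2 e', e' != 0 & zmx_eval G *m (e *: icosa_mx i) = e' *: icosa_mx j.
  move=> Hi e0 /icosa_hasP[j Hj [c c0 E]]; exists j => //.
  exists (e * c); first by rewrite mulf_neq0.
  by rewrite -scalemxAr -(zmx_evalM cyclo5) E; apply: scalerA.
elim=> [|{}M _ [i Hi [e e0 ->]]|{}M _ [i Hi [e e0 ->]]].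
- by have [i Hi [c c0 E]] := one; exists i => //; exists c; rewrite -?zmx_eval1.
- by rewrite -zmx_eval_S; apply: step => //; case/andP: (closed i Hi).
- by rewrite -zmx_eval_T; apply: step => //; case/andP: (closed i Hi).
Qed.

End IcosahedralGroup.

Section KleinFormsEval.
Variables (K : fieldType) (zeta a : K).

Lemma zpoly_eval_vertex : zpoly_eval zeta vertex_form a = klein_vertex (a ^+ 5).
Proof. by rewrite /zpoly_eval /= !zcyc_eval_const /klein_vertex /Zr; ring. Qed.

Lemma zpoly_eval_face : zpoly_eval zeta face_form a = klein_face (a ^+ 5).
Proof. by rewrite /zpoly_eval /= !zcyc_eval_const /klein_face /Zr; ring. Qed.

Lemma zpoly_eval_edge : zpoly_eval zeta edge_form a = klein_edge (a ^+ 5).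
Proof. by rewrite /zpoly_eval /= !zcyc_eval_const /klein_edge /Zr; ring. Qed.

End KleinFormsEval.

Section IcosahedralValues.
Variables (K : fieldType) (f : {rmorphism K -> K}) (zeta a : K).
Hypotheses (f_zeta : f zeta = zeta ^+ 4) (f_a : f a = a).
Hypothesis cyclo5 : 1 + zeta + zeta ^+ 2 + zeta ^+ 3 + zeta ^+ 4 = 0.
Hypotheses (char2 : (2%:R : K) != 0) (char3 : (3%:R : K) != 0) (char5 : (5%:R : K) != 0).
Hypotheses (vertex_a : klein_vertex (a ^+ 5) != 0) (face_a : klein_face (a ^+ 5) != 0).
Hypothesis edge_a : klein_edge (a ^+ 5) != 0.
Local Notation icosa_mx i := (zmx_eval zeta (nth zmx1 icosa i)).
Local Notation dvd_certP := (zpoly_dvd_certP cyclo5 char2 char3 char5).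

Lemma icosa_den_neq0 i : (i < size icosa)%N -> mobius_den (icosa_mx i) a != 0.
Proof.
move=> Hi; have /and3P[_ _ /(all_nthP zmx1)/(_ i Hi)/andP[pole _]] := icosa_certifiedT.
apply: contra vertex_a => /eqP den0; rewrite -(zpoly_eval_vertex zeta) (dvd_certP pole) //.
by rewrite -den0 /mobius_den !mxE /= mulr0 addr0 addrC mulrC.
Qed.

Lemma icosa_fixpoly_neq0 i e : (i < size icosa)%N -> e != 0 -> ~ in_Hbar zeta (e *: icosa_mx i) ->
  zpoly_eval zeta (icosa_fixpoly (nth zmx1 icosa i)) a != 0.
Proof.
move=> Hi e0 notH; have /and3P[_ _ /(all_nthP zmx1)/(_ i Hi)/andP[_]] := icosa_certifiedT.
case/orP=> [inH|certs]; last first.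
  rewrite /= orbF in certs; case/or3P: certs => cert.
  - by apply: contra vertex_a => /eqP fix0; rewrite -(zpoly_eval_vertex zeta) (dvd_certP cert).
  - by apply: contra face_a => /eqP fix0; rewrite -(zpoly_eval_face zeta) (dvd_certP cert).
  - by apply: contra edge_a => /eqP fix0; rewrite -(zpoly_eval_edge zeta) (dvd_certP cert).
exfalso; apply: notH; rewrite /= orbF in inH.
case/or4P: inH => /(zmx_proportionalP cyclo5 char2 char3 char5)[c c0 E]; exists (e * c);
  split; rewrite ?mulf_neq0 // E scalerA.
- by left; rewrite zmx_eval1.
- by right; left; rewrite zmx_eval_T.
- by right; right; left; rewrite zmx_eval_U.
- by right; right; right; rewrite (zmx_evalM cyclo5) zmx_eval_T zmx_eval_U.
Qed.

Lemma G60mx_mobius_not_fixed M : G60mx zeta M -> ~ in_Hbar zeta M ->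
  mobius_den M a != 0 /\ f (mobius M a) != mobius M a.
Proof.
move=> GM notH.
have [c c0 twM] := twisted_G60 (cyclo5_expr5 cyclo5) f_zeta GM.
have [i Hi [e e0 ME]] := G60mx_icosa cyclo5 char2 char3 char5 GM.
have denM : mobius_den M a != 0 by rewrite ME mobius_denZ mulf_neq0 ?icosa_den_neq0.
have denUMU : mobius_den (Umx K *m M *m Umx K) a != 0.
  move: denM; rewrite -(fmorph_eq0 f) rmorph_mobius_den f_a twM mobius_denZ.
  by rewrite mulf_eq0 negb_or => /andP[].
split=> //; rewrite rmorph_mobius f_a twM mobiusZ // eq_sym mobius_eqE //.
have -> : Umx K *m M *m Umx K
    = e *: zmx_eval zeta (zmx_mul (zmx_mul zU (nth zmx1 icosa i)) zU).
  by rewrite ME !(zmx_evalM cyclo5) zmx_eval_U -scalemxAr -scalemxAl.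
rewrite {1}ME mobius_crossZ -(zmx_crossE cyclo5) !mulf_neq0 //.
by apply: (icosa_fixpoly_neq0 Hi e0); rewrite -ME.
Qed.

End IcosahedralValues.

Lemma prim_root5_cyclo (R : idomainType) (z : R) :
  5.-primitive_root z -> 1 + z + z ^+ 2 + z ^+ 3 + z ^+ 4 = 0.
Proof.
move=> z_prim; have z1 : z != 1 by rewrite -(expr1 z) -(prim_order_dvd z_prim).
have : (z - 1) * (1 + z + z ^+ 2 + z ^+ 3 + z ^+ 4) = z ^+ 5 - 1 by ring.
rewrite (prim_expr_order z_prim) subrr => /eqP.
by rewrite mulf_eq0 subr_eq0 (negbTE z1) => /eqP.
Qed.

Lemma natr_lt_pchar_neq0 (R : nzRingType) l p :
  l \in [pchar R] -> (0 < p < l)%N -> p%:R != 0 :> R.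
Proof.
move=> char_l /andP[p0 pl]; rewrite -(dvdn_pcharf char_l).
by apply: contraTN pl => /(dvdn_leq p0); rewrite leqNgt.
Qed.

Theorem proposition3p3 (l : nat) (K : finFieldType) (zeta j a1 : K) :
  prime l -> (l %% 5 = 4)%N -> #|K| = (l ^ 2)%N ->
  5.-primitive_root zeta ->
  j ^+ l = j -> j != 0 -> j != 1728%:R ->
  a1 ^+ l = a1 -> Gfun (a1 ^+ 5) j = 0 ->
  forall M : 'M[K]_2, G60mx zeta M -> ~ in_Hbar zeta M ->
    (M ord_max ord0 * a1 + M ord_max ord_max != 0) /\
    (mobius M a1) ^+ l != mobius M a1.
Proof.
move=> l_prime l_mod5 cardK zeta_prim _ j0 j1728 a1_l Ga1 M GM notH.
have char_l : l \in [pchar K] := card_finPcharP cardK l_prime.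
have l_neq4 : l != 4%N by apply: contraTneq l_prime => ->.
have charK p : (0 < p <= 5)%N -> p%:R != 0 :> K.
  by move=> p5; apply: (natr_lt_pchar_neq0 char_l); lia.
have frob_zeta : pFrobenius_aut char_l zeta = zeta ^+ 4.
  by rewrite pFrobenius_autE -(prim_expr_mod zeta_prim) l_mod5.
have frob_a1 : pFrobenius_aut char_l a1 = a1 by rewrite pFrobenius_autE.
rewrite -(pFrobenius_autE char_l).
apply: (G60mx_mobius_not_fixed frob_zeta frob_a1 (prim_root5_cyclo zeta_prim)
          (charK 2%N isT) (charK 3%N isT) (charK 5%N isT)).
- exact: Gfun_root_vertex_neq0 (charK 5%N isT) Ga1.
- exact: Gfun_root_face_neq0 (charK 5%N isT) Ga1 j0.
- exact: Gfun_root_edge_neq0 (charK 5%N isT) Ga1 j1728.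
- exact: GM.
- exact: notH.
Qed.
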